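(* Let $p\ge 7$ be a prime and $k$ an integer with $(p+1)/2\le k\le p-3$. Then $\mathsf{BO}(k,\mathbb{Z}/p\mathbb{Z})=k+1$.
   Context: For a positive integer $k$, a set $\{g_1,\dots,g_k\}$ of $k$ distinct elements of a finite abelian group $G$ (written additively) is called $k$-barycentric if $\sum_{i=1}^k g_i = k\,g_j$ for some $1\le j\le k$. The $k$-th barycentric Olson constant $\mathsf{BO}(k,G)$ is the smallest integer $\ell$ such that every subset $A\subseteq G$ with $|A|\ge \ell$ contains a $k$-barycentric subset (so that always $\mathsf{BO}(k,G)\le |G|+1$). *)

From HB Require Import structures.
From mathcomp Require Import all_boot all_order all_algebra.
Set Implicit Arguments. Unset Strict Implicit. Unset Printing Implicit Defensive.
Import GRing.Theory.
Local Open Scope ring_scope.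

Definition barycentric (G : finZmodType) (k : nat) (S : {set G}) : bool :=
  (#|S| == k)%N && [exists j in S, \sum_(g in S) g == j *+ k].

Definition BO_bound (G : finZmodType) (k : nat) (ell : nat) : bool :=
  [forall A : {set G}, (ell <= #|A|)%N ==>
     [exists S : {set G}, (S \subset A) && barycentric k S]].

Lemma BO_bound_exists (G : finZmodType) (k : nat) : exists ell, BO_bound G k ell.
Proof.
exists #|G|.+1; apply/forallP => A; apply/implyP => H.
by move: (max_card A); rewrite leqNgt H.
Qed.

Definition BO (k : nat) (G : finZmodType) : nat := ex_minn (BO_bound_exists G k).

From mathcomp Require Import all_boot all_order all_algebra.
From mathcomp Require Import zify.
Import GRing.Theory.

(* Upper bound (valid in any finite abelian group G with |G| <= 2k in which
   x |-> k x and x |-> (k+1) x are injective): for |A| = k+1 with sum s, the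
   map f b = s - k b is injective, so A and f(A) meet in at least two points;
   since f has at most one fixed point there are a <> b in A with a = f(b),
   and then A \ {a} has sum s - a = k b with b in A \ {a}.

   Lower bound (valid whenever the sum of all elements of G is 0 and x |-> k x
   is injective): if B is (|G| - k)-barycentric, with sum (|G| - k) b, then
   the complement of B has k elements and sum k b, and b is not in it, so it
   is not k-barycentric.  For G = Z/pZ such a B is built from an explicit
   sequence of naturals below p, which needs 3 <= p - k and 2(p - k) < p. *)

Lemma subset_of_card (T : finType) (A : {set T}) n :
  (n <= #|A|)%N -> exists2 B : {set T}, B \subset A & #|B| = n.
Proof.
move=> le_nA; exists [set x in take n (enum A)].
  by apply/subsetP => x; rewrite inE => /mem_take; rewrite mem_enum.
rewrite cardsE (card_uniqP _) ?take_uniq ?enum_uniq // size_take -cardE.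
by case: ltnP le_nA => //; lia.
Qed.

Lemma sumn_iota0 n : sumn (iota 0 n) = 'C(n, 2).
Proof. by rewrite sumnE -bin2_sum /index_iota subn0. Qed.

Lemma sumn_iota_odd r : sumn (iota 0 r.*2.+1) = r.*2.+1 * r.
Proof. by rewrite sumn_iota0 bin2odd /= ?odd_double // doubleK. Qed.

(* For m = 2r+1 take
   0, ..., 2r (middle term r); for m = 2r+4 take 0, ..., 2r+2 and 3r+5,
   whose sum is (2r+4)(r+2). *)
Lemma barycentric_nat_seq m : (3 <= m)%N ->
  exists s c, [/\ uniq s, size s = m, c \in s, sumn s = m * c
                & forall x, x \in s -> (x < m.*2)%N].
Proof.
move=> m_ge3; have [r [m_odd | m_even]] : exists r, m = r.*2.+1 \/ m = r.*2.+4.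
  by exists (m.-1./2 - (~~ odd m)); have := odd_double_half m; case: (odd m) => /=; lia.
- exists (iota 0 m), r; rewrite m_odd iota_uniq size_iota mem_iota sumn_iota_odd.
  by split=> // [|x]; rewrite ?mem_iota; lia.
- exists (rcons (iota 0 r.*2.+3) (3 * r + 5)), r.+2; rewrite m_even.
  split.
  + by rewrite rcons_uniq iota_uniq mem_iota andbT; lia.
  + by rewrite size_rcons size_iota.
  + by rewrite mem_rcons in_cons mem_iota orbC; lia.
  + by rewrite sumn_rcons (sumn_iota_odd r.+1); lia.
  + by move=> x; rewrite mem_rcons in_cons mem_iota; lia.
Qed.

Local Open Scope ring_scope.

Section BarycentricOlson.

Variables (G : finZmodType) (k : nat).

Lemma BO_bound_mono ell ell' :
  (ell <= ell')%N -> BO_bound G k ell -> BO_bound G k ell'.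
Proof.
move=> le_ell /forallP bound; apply/forallP => A; apply/implyP => large.
by apply: (implyP (bound A)); apply: leq_trans large.
Qed.

Lemma BO_eq_succ : BO_bound G k k.+1 -> ~~ BO_bound G k k -> BO k G = k.+1.
Proof.
rewrite /BO => good bad; case: ex_minnP => n bound_n minimal.
apply/eqP; rewrite eqn_leq minimal //= ltnNge.
by apply: contra bad => le_nk; apply: BO_bound_mono bound_n.
Qed.

(* Every element is killed by the order of the group: translating by b
   permutes G, so the sum of all elements is unchanged by adding |G| b. *)
Lemma mulrn_card_eq0 (b : G) : b *+ #|G| = 0.
Proof.
have shift : \sum_(x : G) (x + b) = \sum_(x : G) x.
  by rewrite [RHS](reindex_inj (addIr b)).
by move: shift; rewrite big_split sumr_const => /(canRL (addKr _)); rewrite addNr.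
Qed.

(* If doubling is injective, x |-> -x has no fixed point but 0, and the sum
   of all elements, being equal to its own opposite, vanishes. *)
Lemma sum_all_eq0 : injective (fun x : G => x *+ 2) -> \sum_(x : G) x = 0.
Proof.
move=> double_inj; apply: double_inj => /=.
have self_opp : \sum_(x : G) x = - \sum_(x : G) x.
  by rewrite [LHS](reindex_inj (@oppr_inj G)) sumrN.
by rewrite mul0rn mulr2n {1}self_opp addNr.
Qed.

Hypothesis mulk_inj : injective (fun x : G => x *+ k).

Lemma barycentric_in_succ_set :
  injective (fun x : G => x *+ k.+1) -> (#|G| <= k.*2)%N ->
  forall A : {set G}, #|A| = k.+1 -> exists2 S : {set G}, S \subset A & barycentric k S.
Proof.
move=> mulk1_inj small_G A cardA.
pose s := \sum_(x in A) x; pose f b := s - b *+ k.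
have f_inj : injective f by move=> a b /addrI/oppr_inj/mulk_inj.
have fixed_unique x y : x = f x -> y = f y -> x = y.
  have fixedE z : z = f z -> z *+ k.+1 = s by move=> fz; rewrite mulrS {1}fz subrK.
  by move=> /fixedE fx /fixedE fy; apply: mulk1_inj; rewrite /= fx fy.
have meet2 : (1 < #|A :&: f @: A|)%N.
  have := cardsUI A (f @: A); have := leq_trans (max_card (A :|: f @: A)) small_G.
  by rewrite card_imset // cardA; lia.
have [a [b [aA bA ab a_fb]]] : exists a b, [/\ a \in A, b \in A, a != b & a = f b].
  case/card_gt1P: meet2 => x [y []].
  rewrite !inE => /andP[xA /imsetP[x' x'A ex]] /andP[yA /imsetP[y' y'A ey]] fxy.
  subst x y.
  case: (eqVneq (f x') x') => [fx'|]; last by exists (f x'), x'.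
  case: (eqVneq (f y') y') => [fy'|]; last by exists (f y'), y'.
  by rewrite fx' fy' (fixed_unique x' y') ?eqxx in fxy.
exists (A :\ a); first exact: subD1set.
apply/andP; split; first by move: (cardsD1 a A); rewrite aA cardA add1n => -[<-].
apply/existsP; exists b; rewrite !inE eq_sym ab bA /=.
by apply/eqP/(addrI a); rewrite -big_setD1 // -/s a_fb subrK.
Qed.

Lemma BO_bound_succ :
  injective (fun x : G => x *+ k.+1) -> (#|G| <= k.*2)%N -> BO_bound G k k.+1.
Proof.
move=> mulk1_inj small_G; apply/forallP => A; apply/implyP => /subset_of_card.
case=> A' sA'A /(barycentric_in_succ_set mulk1_inj small_G) [S sSA' bary_S].
by apply/existsP; exists S; rewrite bary_S (subset_trans sSA' sA'A).
Qed.

Lemma not_BO_bound_complement (B : {set G}) :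
  \sum_(x : G) x = 0 -> (k <= #|G|)%N -> barycentric (#|G| - k) B ->
  ~~ BO_bound G k k.
Proof.
move=> sum0 le_kG /andP[/eqP cardB /existsP[b /andP[bB /eqP sumB]]].
have cardCB : #|~: B| = k by rewrite -[LHS](addKn #|B|) cardsC cardB subKn.
have sumCB : \sum_(x in ~: B) x = b *+ k.
  have total : \sum_(x in B) x + \sum_(x in ~: B) x = 0.
    rewrite -[RHS]sum0 [RHS](bigID (mem B)).
    by congr (_ + _); apply: eq_bigl => x; rewrite ?inE.
  apply: (addrI (b *+ (#|G| - k))).
  by rewrite -{1}sumB total -mulrnDr subnK // mulrn_card_eq0.
apply/negP => /forallP/(_ (~: B)); rewrite cardCB leqnn /=.
case/existsP => S /andP[sSCB /andP[/eqP cardS /existsP[j /andP[jS /eqP sumS]]]].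
have SCB : S = ~: B by apply/eqP; rewrite eqEcard sSCB cardS cardCB leqnn.
move: jS; rewrite SCB inE => /negP; apply.
suff -> : j = b by [].
by apply: mulk_inj; rewrite /= -sumS SCB sumCB.
Qed.

End BarycentricOlson.

Lemma card_Zp_ord p : (1 < p)%N -> #|'Z_p| = p.
Proof. by move=> p_gt1; rewrite card_ord Zp_cast. Qed.

Lemma mulrn_inj_Zp p n : prime p -> (0 < n < p)%N -> injective (fun x : 'Z_p => x *+ n).
Proof.
move=> p_prime /andP[n_gt0 n_lt_p].
have n_unit : (n%:R : 'Z_p) \is a GRing.unit.
  rewrite (unitZpE _ (prime_gt1 p_prime)).
  by rewrite (prime_coprime _ p_prime) (gtnNdvd n_gt0 n_lt_p).
move=> x y /= eq_xy; apply: (mulIr n_unit); rewrite !mulr_natr.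
exact: eq_xy.
Qed.

Lemma barycentric_Zp_of_nat_seq p m (s : seq nat) c :
  (1 < p)%N -> uniq s -> size s = m -> c \in s -> sumn s = (m * c)%N ->
  (forall x, x \in s -> (x < p)%N) ->
  barycentric m [set x in map (fun n => n%:R : 'Z_p) s].
Proof.
move=> p_gt1 s_uniq size_s c_s sum_s s_lt_p.
have cast_inj : {in s &, injective (fun n => n%:R : 'Z_p)}.
  move=> x y xs ys /(congr1 (@nat_of_ord _)).
  rewrite (val_Zp_nat p_gt1) (val_Zp_nat p_gt1).
  by rewrite (modn_small (s_lt_p x xs)) (modn_small (s_lt_p y ys)).
have map_uniq : uniq (map (fun n => n%:R : 'Z_p) s) by rewrite map_inj_in_uniq.
apply/andP; split.
  by rewrite cardsE (card_uniqP map_uniq) size_map size_s.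
apply/existsP; exists c%:R; rewrite inE map_f //=.
rewrite (eq_bigl (mem (map (fun n => n%:R : 'Z_p) s))) => [|x]; last by rewrite inE.
by rewrite -big_uniq //= big_map -natr_sum -sumnE sum_s natrM mulr_natl.
Qed.

Lemma barycentric_Zp p m : prime p -> (3 <= m)%N -> (m.*2 < p)%N ->
  exists B : {set 'Z_p}, barycentric m B.
Proof.
move=> p_prime m_ge3 m2_lt_p.
have [s [c [s_uniq size_s c_s sum_s s_lt]]] := barycentric_nat_seq _ m_ge3.
exists [set x in map (fun n => n%:R : 'Z_p) s].
apply: barycentric_Zp_of_nat_seq (prime_gt1 p_prime) s_uniq size_s c_s sum_s _.
by move=> x /s_lt /ltn_trans; apply.
Qed.

Local Close Scope ring_scope.

Theorem mainTheorem6 (p k : nat) (hp : prime p) (hp7 : (7 <= p)%N)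
  (hk1 : ((p + 1) %/ 2 <= k)%N) (hk2 : (k <= p - 3)%N) :
  BO k 'Z_p = k.+1.
Proof.
have card_Z := card_Zp_ord _ (prime_gt1 hp).
have p_odd : odd p by case/even_prime: hp => // p_eq2; rewrite p_eq2 in hp7.
have p_lt_2k : (p < k.*2)%N by have := odd_double_half p; rewrite p_odd; lia.
have mul_inj n : 0 < n < p -> injective (fun x : 'Z_p => (x *+ n)%R).
  exact: mulrn_inj_Zp.
apply: BO_eq_succ.
- by apply: BO_bound_succ; [apply: mul_inj | apply: mul_inj | rewrite card_Z]; lia.
- have [B bary_B] : exists B : {set 'Z_p}, barycentric (p - k) B.
    by apply: barycentric_Zp; lia.
  apply: (@not_BO_bound_complement _ _ _ B); rewrite ?card_Z //; last lia.
  + by apply: mul_inj; lia.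
  + by apply: sum_all_eq0; apply: mul_inj; lia.
Qed.
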